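(* Let $\alpha,\alpha'$ be probability distributions on $[d]$, $n\ge1$, $\lambda\sim\mathrm{SW}^n(\alpha)$, $\lambda'\sim\mathrm{SW}^n(\alpha')$, and $\underline\lambda=\lambda/n$, $\underline\lambda'=\lambda'/n$. Then for every $k\in[d]$, \[ \big|\mathbb E[\underline\lambda_1+\cdots+\underline\lambda_k]-\mathbb E[\underline\lambda'_1+\cdots+\underline\lambda'_k]\big|\le d_{TV}(\alpha,\alpha'),\qquad \big|\mathbb E[\underline\lambda_k]-\mathbb E[\underline\lambda'_k]\big|\le 2\,d_{TV}(\alpha,\alpha'). \]
   Context: $d_{TV}(\alpha,\alpha')=\tfrac12\sum_i|\alpha_i-\alpha'_i|$. $\mathrm{SW}^n(\alpha)$ is the law of the RSK shape $\mathrm{shRSK}(\boldsymbol w)$ (Young diagram whose first $k$ rows sum to the maximum total length of $k$ disjoint weakly increasing subsequences of $\boldsymbol w$), where $\boldsymbol w\in[d]^n$ has i.i.d. letters with law $\alpha$. *)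

From HB Require Import structures.
From mathcomp Require Import all_boot all_order all_algebra.
Set Implicit Arguments. Unset Strict Implicit. Unset Printing Implicit Defensive.
Import Order.TTheory GRing.Theory Num.Theory.

(* Words w in [d]^n are n-tuples of letters in 'I_d (letter j : 'I_d stands for j+1). *)

Definition weakly_incr (d n : nat) (w : n.-tuple 'I_d) (S : {set 'I_n}) : bool :=
  [forall i in S, forall j in S, (i < j)%N ==> (tnth w i <= tnth w j)%N].

Definition disj_incr_family (d n k : nat) (w : n.-tuple 'I_d)
  (F : {ffun 'I_k -> {set 'I_n}}) : bool :=
  [forall i, weakly_incr w (F i)] &&
  [forall i, forall j, (i != j) ==> [disjoint F i & F j]].

(* greene k w = maximum total length of k disjoint weakly increasing
   subsequences of w (= lambda_1 + ... + lambda_k for lambda = shRSK w). *)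
Definition greene (d n k : nat) (w : n.-tuple 'I_d) : nat :=
  \max_(F : {ffun 'I_k -> {set 'I_n}} | disj_incr_family w F) \sum_(i < k) #|F i|.

(* j-th row (1-indexed) of the RSK shape: lambda_j = greene j - greene (j-1). *)
Definition shRSK_row (d n j : nat) (w : n.-tuple 'I_d) : nat :=
  (greene j w - greene j.-1 w)%N.

Local Open Scope ring_scope.

Definition is_distr (R : realFieldType) (d : nat) (alpha : 'I_d -> R) : Prop :=
  (forall i, 0 <= alpha i) /\ \sum_(i < d) alpha i = 1.

Definition Ew (R : realFieldType) (d n : nat) (alpha : 'I_d -> R)
  (f : n.-tuple 'I_d -> R) : R :=
  \sum_(w : n.-tuple 'I_d) (\prod_(i < n) alpha (tnth w i)) * f w.

Definition dTV (R : realFieldType) (d : nat) (alpha alpha' : 'I_d -> R) : R :=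
  2^-1 * \sum_(i < d) `|alpha i - alpha' i|.

(* The k-th Greene invariant of a word changes by at most one when a single
   letter is changed: deleting that position from each of the k subsequences
   costs at most one element.  For a function with this bounded-difference
   property, replacing the law of the letters one at a time moves its
   expectation by at most dTV(alpha, alpha') per letter, hence by at most
   n dTV(alpha, alpha') in total; dividing by n gives the bound on
   lambda_1 + ... + lambda_k, and writing lambda_k as the difference of two
   such partial sums gives the second bound. *)
From HB Require Import structures.
From mathcomp Require Import all_boot all_order all_algebra.
From mathcomp Require Import lra.
Import Order.TTheory GRing.Theory Num.Theory.
Local Open Scope ring_scope.
Set Implicit Arguments. Unset Strict Implicit.

Lemma mulr_unit_interval_bounds (R : realFieldType) (x h : R) :
  0 <= h -> h <= 1 -> - ((`|x| - x) / 2) <= x * h <= (`|x| + x) / 2.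
Proof.
move=> h0 h1; case: (lerP 0 x) => hx;
  [rewrite ger0_norm // | rewrite ltr0_norm //]; apply/andP; split; nra.
Qed.

Lemma dTV_ge0 (R : realFieldType) d (al al' : 'I_d -> R) : 0 <= dTV al al'.
Proof. by rewrite /dTV mulr_ge0 ?invr_ge0 ?ler0n // sumr_ge0. Qed.

Lemma norm_sum_distrB_le_dTV (R : realFieldType) d (al al' : 'I_d -> R)
  (g : 'I_d -> R) : is_distr al -> is_distr al' ->
  (forall a b, g a - g b <= 1) ->
  `|\sum_a (al a - al' a) * g a| <= dTV al al'.
Proof.
move=> Ha Ha' Hg.
have [/existsP [a0 _]|/existsPn d0] := boolP [exists a : 'I_d, true]; last first.
  by rewrite big1 ?normr0 ?dTV_ge0 // => a; have := d0 a.
pose amin := [arg min_(i < a0) g i]%O.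
have g_min a : 0 <= g a - g amin.
  rewrite subr_ge0 /amin; case: (@real_arg_minP R _ a0 predT g isT) => // [i _|i _ -> //].
  exact: num_real.
have sum_diff0 : \sum_a (al a - al' a) = 0 by rewrite sumrB Ha.2 Ha'.2 subrr.
(* Shifting g by a constant is free, so we may assume g takes values in [0, 1]. *)
have -> : \sum_a (al a - al' a) * g a = \sum_a (al a - al' a) * (g a - g amin).
  under [RHS]eq_bigr do rewrite mulrBr.
  by rewrite sumrB -big_distrl /= sum_diff0 mul0r subr0.
have dTV_pos : \sum_a (`|al a - al' a| + (al a - al' a)) / 2 = dTV al al'.
  by rewrite -big_distrl /= big_split /= sum_diff0 addr0 /dTV mulrC.
have dTV_neg : \sum_a (`|al a - al' a| - (al a - al' a)) / 2 = dTV al al'.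
  by rewrite -big_distrl /= sumrB sum_diff0 subr0 /dTV mulrC.
have bounds a := mulr_unit_interval_bounds (al a - al' a) (g_min a) (Hg a amin).
rewrite ler_norml; apply/andP; split.
  by rewrite -dTV_neg -sumrN; apply: ler_sum => a _; case/andP: (bounds a).
by rewrite -dTV_pos; apply: ler_sum => a _; case/andP: (bounds a).
Qed.

Section WordExpectation.
Variables (R : realFieldType) (d : nat).
Implicit Types (al : 'I_d -> R) (a : 'I_d).

Lemma eq_Ew al n (f g : n.-tuple 'I_d -> R) :
  f =1 g -> Ew al f = Ew al g.
Proof. by move=> fg; apply: eq_bigr => w _; rewrite fg. Qed.

Lemma EwB al n (f g : n.-tuple 'I_d -> R) :
  Ew al (fun w => f w - g w) = Ew al f - Ew al g.
Proof. by rewrite /Ew -sumrB; apply: eq_bigr => w _; rewrite mulrBr. Qed.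

Lemma Ew_divl al n (f : n.-tuple 'I_d -> R) c :
  Ew al (fun w => f w / c) = Ew al f / c.
Proof. by rewrite /Ew mulr_suml; apply: eq_bigr => w _; rewrite mulrA. Qed.

Lemma ler_Ew al n (f g : n.-tuple 'I_d -> R) : is_distr al ->
  (forall w, f w <= g w) -> Ew al f <= Ew al g.
Proof.
move=> Ha fg; apply: ler_sum => w _; apply: ler_wpM2l => //.
by apply: prodr_ge0 => i _; apply: Ha.1.
Qed.

Lemma Ew_tuple0 al (f : 0.-tuple 'I_d -> R) : Ew al f = f [tuple].
Proof.
by rewrite /Ew (big_pred1 [tuple]) ?big_ord0 ?mul1r // => t; rewrite [t]tuple0 /= eqxx.
Qed.

Lemma Ew_cons al n (f : n.+1.-tuple 'I_d -> R) :
  Ew al f = \sum_a al a * Ew al (fun t : n.-tuple 'I_d => f [tuple of a :: t]).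
Proof.
rewrite /Ew [RHS](eq_bigr _ (fun a _ => big_distrr _ _ _)) pair_big /=.
rewrite (reindex (fun p : 'I_d * n.-tuple 'I_d => [tuple of p.1 :: p.2])) /=.
  apply: eq_bigr => -[a t] _; rewrite big_ord_recl -mulrA /=.
  by congr (_ * (_ * _)); apply: eq_bigr => i _; rewrite !(tnth_nth a).
exists (fun w : n.+1.-tuple 'I_d => (thead w, [tuple of behead w])).
  by move=> [a t] _; congr pair; apply: val_inj.
by move=> w _; rewrite -tuple_eta.
Qed.

Lemma Ew_cst al n c : is_distr al -> Ew al (fun _ : n.-tuple 'I_d => c) = c.
Proof.
move=> Ha; elim: n => [|n IHn]; first by rewrite Ew_tuple0.
by rewrite Ew_cons; under eq_bigr do rewrite IHn; rewrite -big_distrl /= Ha.2 mul1r.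
Qed.

Definition bounded_differences n (f : n.-tuple 'I_d -> R) :=
  forall (w w' : n.-tuple 'I_d) (p : 'I_n),
  (forall i, i != p -> tnth w i = tnth w' i) -> f w - f w' <= 1.

Lemma bounded_differences_cons n (f : n.+1.-tuple 'I_d -> R) a :
  bounded_differences f ->
  bounded_differences (fun t : n.-tuple 'I_d => f [tuple of a :: t]).
Proof.
move=> Hf w w' p wp; apply: (Hf _ _ (lift ord0 p)) => i.
case: (unliftP ord0 i) => [j ->|-> //].
by rewrite (inj_eq (@lift_inj _ ord0)) => /wp; rewrite !(tnth_nth a).
Qed.

(* Hybrid argument: the first letter is resampled under al' while the law of
   the remaining ones is still al, and induction handles the rest. *)
Lemma Ew_bounded_differences al al' n (f : n.-tuple 'I_d -> R) :
  is_distr al -> is_distr al' -> bounded_differences f ->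
  `|Ew al f - Ew al' f| <= n%:R * dTV al al'.
Proof.
move=> Ha Ha'; elim: n f => [|n IHn] f Hf; first by rewrite !Ew_tuple0 subrr normr0 mul0r.
rewrite !Ew_cons.
set F := fun a => Ew al (fun t : n.-tuple 'I_d => f [tuple of a :: t]).
set G := fun a => Ew al' (fun t : n.-tuple 'I_d => f [tuple of a :: t]).
have -> : \sum_a al a * F a - \sum_a al' a * G a =
          \sum_a al a * (F a - G a) + \sum_a (al a - al' a) * G a.
  by rewrite -big_split -sumrB; apply: eq_bigr => a _; rewrite /= mulrBr mulrBl addrA subrK.
rewrite mulrSr mulrDl mul1r; apply: (le_trans (ler_normD _ _)); apply: lerD.
  apply: (le_trans (ler_norm_sum _ _ _)).
  apply: (@le_trans _ _ (\sum_a al a * (n%:R * dTV al al'))).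
    apply: ler_sum => a _; rewrite normrM ger0_norm ?Ha.1 //.
    exact/ler_wpM2l/IHn/bounded_differences_cons/Hf/Ha.1.
  by rewrite -big_distrl /= Ha.2 mul1r.
apply: norm_sum_distrB_le_dTV => // a b.
rewrite /G -EwB -(Ew_cst n 1 Ha'); apply: ler_Ew => // t.
apply: (Hf _ _ ord0) => i; case: (unliftP ord0 i) => [j ->|-> //].
by rewrite !(tnth_nth a).
Qed.

End WordExpectation.

Lemma greene0 d n (w : n.-tuple 'I_d) : greene 0 w = 0%N.
Proof. by apply/eqP; rewrite -leqn0; apply/bigmax_leqP => F _; rewrite big_ord0. Qed.

Lemma greene_leS d n k (w : n.-tuple 'I_d) : (greene k w <= greene k.+1 w)%N.
Proof.
apply/bigmax_leqP => F /andP [/forallP F_incr /forallP F_disj].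
pose G : {ffun 'I_k.+1 -> {set 'I_n}} :=
  [ffun i => if unlift ord0 i is Some j then F j else set0].
have G_family : disj_incr_family w G.
  apply/andP; split.
    apply/forallP => i; rewrite ffunE; case: (unlift ord0 i) => [j|]; first exact: F_incr.
    by apply/forallP => x; rewrite in_set0.
  apply/forallP => i; apply/forallP => j; apply/implyP; rewrite !ffunE.
  case: (unliftP ord0 i) => [i' ->|->]; rewrite ?liftK ?unlift_none;
    last by rewrite -setI_eq0 set0I.
  case: (unliftP ord0 j) => [j' ->|->]; rewrite ?liftK ?unlift_none;
    last by rewrite -setI_eq0 setI0.
  by rewrite (inj_eq (@lift_inj _ ord0)); move: (F_disj i') => /forallP /(_ j') /implyP.
apply: leq_trans (leq_bigmax_cond _ G_family).
rewrite big_ord_recl ffunE unlift_none cards0 add0n.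
by apply: eq_leq; apply: eq_bigr => i _; rewrite ffunE liftK.
Qed.

Lemma greene_bounded_differences d n k (w w' : n.-tuple 'I_d) (p : 'I_n) :
  (forall i, i != p -> tnth w i = tnth w' i) -> (greene k w <= (greene k w').+1)%N.
Proof.
move=> ww'; apply/bigmax_leqP => F /andP [/forallP F_incr /forallP F_disj].
pose F' : {ffun 'I_k -> {set 'I_n}} := [ffun i => F i :\ p].
have F'_family : disj_incr_family w' F'.
  apply/andP; split.
    apply/forallP => i; rewrite ffunE.
    apply/forallP => x; apply/implyP => /setD1P [xp xF].
    apply/forallP => y; apply/implyP => /setD1P [yp yF].
    rewrite -(ww' x xp) -(ww' y yp).
    by move: (F_incr i) => /forallP /(_ x) /implyP /(_ xF) /forallP /(_ y) /implyP /(_ yF).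
  apply/forallP => i; apply/forallP => j; apply/implyP => ij; rewrite !ffunE.
  apply: (disjointW (subsetDl _ _) (subsetDl _ _)).
  by move: (F_disj i) => /forallP /(_ j) /implyP; apply.
have p_once : (\sum_(i < k) (p \in F i) <= 1)%N.
  have [/existsP [i0 p_i0]|/existsPn p_nowhere] := boolP [exists i, p \in F i].
    rewrite (bigD1 i0) //= p_i0 big1 // => j ji0.
    move: (F_disj i0) => /forallP /(_ j) /implyP.
    by rewrite eq_sym ji0 => /(_ isT) /disjointFr ->.
  by rewrite big1 // => i _; rewrite (negbTE (p_nowhere i)).
have -> : (\sum_(i < k) #|F i| = \sum_(i < k) (p \in F i) + \sum_(i < k) #|F' i|)%N.
  by rewrite -big_split; apply: eq_bigr => i _; rewrite ffunE (cardsD1 p).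
rewrite addnC -addn1 leq_add //.
exact: (leq_bigmax_cond (P := disj_incr_family w') (F := fun F => \sum_(i < k) #|F i|) _ F'_family).
Qed.

Lemma sum_shRSK_row d n k (w : n.-tuple 'I_d) :
  (\sum_(1 <= j < k.+1) shRSK_row j w)%N = greene k w.
Proof.
elim: k => [|k IHk]; first by rewrite big_geq // greene0.
by rewrite big_nat_recr //= IHk /shRSK_row subnKC ?greene_leS.
Qed.

Lemma Ew_greene_dTV (R : realFieldType) d n (al al' : 'I_d -> R) k :
  is_distr al -> is_distr al' -> (1 <= n)%N ->
  `| Ew al (fun w : n.-tuple 'I_d => (greene k w)%:R / n%:R)
     - Ew al' (fun w : n.-tuple 'I_d => (greene k w)%:R / n%:R) | <= dTV al al'.
Proof.
move=> Ha Ha' n_gt0; have n_pos : (0 : R) < n%:R by rewrite ltr0n.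
rewrite !Ew_divl -mulrBl normrM normfV (gtr0_norm n_pos) ler_pdivrMr // mulrC.
apply: Ew_bounded_differences => // w w' p ww'.
by rewrite lerBlDr addrC natr1 ler_nat; apply: greene_bounded_differences ww'.
Qed.

Theorem mainTheorem12 (R : realFieldType) (d n : nat) (alpha alpha' : 'I_d -> R)
  (Ha : is_distr alpha) (Ha' : is_distr alpha') (Hn : (1 <= n)%N)
  (k : nat) (Hk1 : (1 <= k)%N) (Hkd : (k <= d)%N) :
  `| Ew alpha (fun w : n.-tuple 'I_d => \sum_(1 <= j < k.+1) (shRSK_row j w)%:R / n%:R)
     - Ew alpha' (fun w : n.-tuple 'I_d => \sum_(1 <= j < k.+1) (shRSK_row j w)%:R / n%:R) |
    <= dTV alpha alpha'
  /\
  `| Ew alpha (fun w : n.-tuple 'I_d => (shRSK_row k w)%:R / n%:R)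
     - Ew alpha' (fun w : n.-tuple 'I_d => (shRSK_row k w)%:R / n%:R) |
    <= 2 * dTV alpha alpha'.
Proof.
split.
  have partial_sum al : Ew al (fun w : n.-tuple 'I_d =>
        \sum_(1 <= j < k.+1) (shRSK_row j w)%:R / n%:R)
      = Ew al (fun w : n.-tuple 'I_d => (greene k w)%:R / n%:R).
    by apply: eq_Ew => w; rewrite -mulr_suml -natr_sum sum_shRSK_row.
  by rewrite !partial_sum; apply: Ew_greene_dTV.
case: k Hk1 Hkd => [//|k] _ _.
have row_diff al : Ew al (fun w : n.-tuple 'I_d => (shRSK_row k.+1 w)%:R / n%:R)
    = Ew al (fun w : n.-tuple 'I_d => (greene k.+1 w)%:R / n%:R)
      - Ew al (fun w : n.-tuple 'I_d => (greene k w)%:R / n%:R).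
  by rewrite -EwB; apply: eq_Ew => w; rewrite /shRSK_row natrB ?greene_leS // mulrBl.
rewrite !row_diff.
set A := Ew alpha _; set B := Ew alpha _; set A' := Ew alpha' _; set B' := Ew alpha' _.
have -> : A - B - (A' - B') = (A - A') - (B - B') by lra.
rewrite mulr2n mulrDl mul1r; apply: (le_trans (ler_normB _ _)).
by apply: lerD; apply: Ew_greene_dTV.
Qed.
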